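(* Let $Y$ be a $\mathbb{Q}$-vector space with an involution $y\mapsto\bar y$, and let $X^0_{(n)}=\sum_{w\in B_n,\ w_1<w_2<\dots<w_n}w\in\mathbb{Q}B_n$. Then for all $y_1,\dots,y_n\in Y$, $$(y_1\otimes\cdots\otimes y_n)\cdot X^0_{(n)}=\tau\Bigl(\cdots\tau\bigl(\tau(y_1)\,y_2\bigr)\,y_3\cdots y_n\Bigr).$$
   Context: $B_n$: signed permutations $w=w_1\dots w_n$ (bijections of $\{\pm1,\dots,\pm n\}$ with $w(-i)=-w(i)$), values ordered $\cdots<-2<-1<1<2<\cdots$. $B_n$ acts on $Y^{\otimes n}$ on the right by $(y_1\otimes\cdots\otimes y_n)\cdot w=y_{w_1}\otimes\cdots\otimes y_{w_n}$, where $y_{-i}$ means $\bar y_i$; this is extended linearly to $\mathbb{Q}B_n$. In the tensor algebra $TY=\bigoplus_{m\ge0}Y^{\otimes m}$, juxtaposition denotes the tensor product, and the symmetrizer $\tau:TY\to TY$ is the linear map $\tau(y_1\otimes\cdots\otimes y_m)=y_1\otimes\cdots\otimes y_m+\bar y_m\otimes\cdots\otimes\bar y_1$. *)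

From HB Require Import structures.
From mathcomp Require Import all_boot all_order all_algebra.
Set Implicit Arguments. Unset Strict Implicit. Unset Printing Implicit Defensive.
Import Order.TTheory GRing.Theory Num.Theory.
Local Open Scope ring_scope.

(* A signed permutation w of B_n is encoded as w : {ffun 'I_n -> 'I_n * bool}:
   w i = (k, b) means w_{i+1} = -(k+1) if b, and +(k+1) otherwise. *)
Definition sval (n : nat) (p : 'I_n * bool) : int :=
  if p.2 then - (p.1.+1)%:Z else (p.1.+1)%:Z.

Definition signed_perm (n : nat) (w : {ffun 'I_n -> 'I_n * bool}) : bool :=
  injectiveb (fun i => (w i).1).

Definition increasing_sp (n : nat) (w : {ffun 'I_n -> 'I_n * bool}) : bool :=
  [forall i : 'I_n, forall j : 'I_n, (i < j)%N ==> (sval (w i) < sval (w j))].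

(* Elements of the tensor algebra that are sums of pure tensors are encoded
   as formal sums (sequences) of words (seq Y). *)
Section Words.
Variable Y : lmodType rat.
Variable bar : Y -> Y.

Definition act_word (n : nat) (y : 'I_n -> Y) (w : {ffun 'I_n -> 'I_n * bool})
  : seq Y :=
  [seq (if (w i).2 then bar (y (w i).1) else y (w i).1) | i <- enum 'I_n].

Definition tau (s : seq (seq Y)) : seq (seq Y) :=
  flatten [seq [:: u; rev (map bar u)] | u <- s].

Definition tau_chain (x : Y) (rest : seq Y) : seq (seq Y) :=
  foldl (fun acc z => tau [seq rcons u z | u <- acc]) (tau [:: [:: x]]) rest.

End Words.

(* phi : words -> V is multilinear on words of length n; by the universal
   property of Y^{(x)n}, such phi are exactly the linear maps out of Y^{(x)n}. *)
Definition multilinear_on (Y V : lmodType rat) (n : nat) (phi : seq Y -> V) :=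
  forall (s : seq Y) (i : nat) (a : rat) (x z : Y),
    size s = n -> (i < n)%N ->
    phi (set_nth 0 s i (a *: x + z)) =
      a *: phi (set_nth 0 s i x) + phi (set_nth 0 s i z).

From Pilot Require Import Defs.
From HB Require Import structures.
From mathcomp Require Import all_boot all_order all_algebra zify.
Import Order.TTheory GRing.Theory.
Local Open Scope ring_scope.

(* An increasing signed permutation is determined by the set S of its negative
   entries: it lists -s for s in S in decreasing order, then the remaining
   values in increasing order.  Encode S by a mask m, and let W(m) (signed_word)
   be the corresponding word.  For a new letter z, tau (W(m) z) consists of W(m) z and
   of bar z . rev (bar W(m)), which is the word of the complementary mask
   extended by "z is negated".  Hence the chain of n applications of tau lists
   every mask exactly once, i.e. every increasing signed permutation once. *)

Fixpoint sign_masks (k : nat) : seq (seq bool) :=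
  if k is k'.+1 then
    flatten [seq [:: rcons m false; rcons (map negb m) true] | m <- sign_masks k']
  else [:: [::]].

Lemma mem_sign_masks k m : (m \in sign_masks k) = (size m == k).
Proof.
elim: k m => [|k IHk] m /=; first by rewrite inE size_eq0.
apply/flattenP/idP => [[s /mapP[m' m'k ->]]|].
  move: m'k; rewrite IHk => /eqP m'k.
  by rewrite !inE => /orP[]/eqP->; rewrite size_rcons ?size_map m'k.
case/lastP: m => [//|m b]; rewrite size_rcons eqSS => mk.
case: b.
- exists [:: rcons (map negb m) false; rcons (map negb (map negb m)) true].
    by apply: map_f; rewrite IHk size_map.
  by rewrite (mapK negbK) !inE eqxx orbT.
- exists [:: rcons m false; rcons (map negb m) true]; first by apply: map_f; rewrite IHk.
  by rewrite inE eqxx.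
Qed.

Lemma uniq_flatten_pairs (T : eqType) (a b : T -> T) (s : seq T) :
  injective a -> injective b -> (forall x y, a x != b y) -> uniq s ->
  uniq (flatten [seq [:: a x; b x] | x <- s]).
Proof.
move=> inj_a inj_b neq_ab uniq_s.
have pairsE : perm_eq (flatten [seq [:: a x; b x] | x <- s]) (map a s ++ map b s).
  elim: {uniq_s}s => //= x s IHs.
  by rewrite perm_cons -(cat1s (b x) (map b s)) perm_sym perm_catCA /= perm_cons perm_sym.
rewrite (perm_uniq pairsE) cat_uniq !map_inj_uniq // uniq_s /=.
rewrite andbT; apply/hasPn => _ /mapP[x _ ->]; apply/mapP => -[x' _ E].
by move/eqP: (neq_ab x' x); rewrite E.
Qed.

Lemma uniq_sign_masks k : uniq (sign_masks k).
Proof.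
elim: k => [//|k IHk] /=; apply: uniq_flatten_pairs => //.
- by move=> m m' /rcons_inj[].
- by move=> m m' /rcons_inj[] /(inj_map negb_inj).
- by move=> m m'; apply/eqP => /(congr1 (last false)); rewrite !last_rcons.
Qed.

Lemma perm_sign_masks k :
  perm_eq (sign_masks k) (map val (enum {: k.-tuple bool})).
Proof.
apply: uniq_perm; first exact: uniq_sign_masks.
  by rewrite (map_inj_uniq val_inj) enum_uniq.
move=> m; rewrite mem_sign_masks; apply/idP/mapP => [mk | [t _ ->]].
  by exists (Tuple mk); rewrite ?mem_enum.
by rewrite size_tuple.
Qed.

Section SignedWords.
Context {Y : lmodType rat} (bar : Y -> Y).
Hypothesis bar_invol : involutive bar.

Definition signed_word (xs : seq Y) (m : seq bool) : seq Y :=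
  rev (map bar (mask m xs)) ++ mask (map negb m) xs.

Lemma tau_signed_words_rcons (xs : seq Y) z :
  tau bar [seq rcons u z | u <- map (signed_word xs) (sign_masks (size xs))] =
  map (signed_word (rcons xs z)) (sign_masks (size xs).+1).
Proof.
rewrite /tau /= map_flatten -!map_comp; congr flatten.
apply/eq_in_map => m; rewrite mem_sign_masks => /eqP mxs /=.
rewrite /signed_word !map_rcons !mask_rcons ?size_map // !cats0 (mapK negbK).
by rewrite -cats1 -catA rev_rcons !map_cat !rev_cat map_rev revK (mapK bar_invol).
Qed.

Lemma foldl_tau_signed_words (xs rest : seq Y) :
  foldl (fun acc z => tau bar [seq rcons u z | u <- acc])
     (map (signed_word xs) (sign_masks (size xs))) rest =
  map (signed_word (xs ++ rest)) (sign_masks (size (xs ++ rest))).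
Proof.
elim: rest xs => [|z rest IHrest] xs /=; first by rewrite cats0.
by rewrite tau_signed_words_rcons -(size_rcons xs z) IHrest cat_rcons.
Qed.

Lemma tau_chainE x rest :
  tau_chain bar x rest = map (signed_word (x :: rest)) (sign_masks (size rest).+1).
Proof. exact: (foldl_tau_signed_words [:: x]). Qed.

End SignedWords.

Lemma sorted_enum_ord k : sorted (relpre val ltn) (enum 'I_k).
Proof. by rewrite -sorted_map val_enum_ord iota_ltn_sorted. Qed.

Section IncreasingSignedPerms.
Variable n : nat.
Local Notation N := n.+1.
Local Notation sp := {ffun 'I_N -> 'I_N * bool}.
Local Notation svalN := (@Defs.sval N).

Lemma sval_inj : injective svalN.
Proof.
move=> [a []] [c []]; rewrite /Defs.sval /= => E; try (exfalso; lia);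
by have /val_inj -> : (a : nat) = c by lia.
Qed.

Lemma signed_permE (w : sp) : signed_perm w = uniq (map fst (codom w)).
Proof. by rewrite codomE -map_comp. Qed.

Lemma increasing_spE (w : sp) : increasing_sp w = sorted <%R (map svalN (codom w)).
Proof.
rewrite codomE -map_comp; set s := map _ _.
have nth_s (i : 'I_N) : nth 0 s i = svalN (w i).
  by rewrite (nth_map ord0) ?size_enum_ord // nth_ord_enum.
apply/idP/idP => [incr | sorted_s].
  rewrite sorted_map; apply: sub_sorted (sorted_enum_ord N) => i j /= lt_ij.
  by move/forallP: incr => /(_ i) /forallP /(_ j) /implyP; apply.
apply/forallP => i; apply/forallP => j; apply/implyP => lt_ij; rewrite -!nth_s.
by apply: (sorted_ltn_nth lt_trans) => //; rewrite inE size_map size_enum_ord.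
Qed.

Lemma signed_perm_codom (w : sp) j b : signed_perm w ->
  ((j, b) \in codom w) = (b == ((j, true) \in codom w)).
Proof.
move/injectiveP => inj_w.
have sign_uniq b1 b2 : (j, b1) \in codom w -> (j, b2) \in codom w -> b1 = b2.
  case/codomP => i1 E1 /codomP[i2 E2].
  have i12 : i1 = i2 by apply: inj_w; rewrite /= -E1 -E2.
  by move: E2; rewrite -i12 -E1 => -[].
have [g _ gK] := injF_bij inj_w.
have j_in : (j, (w (g j)).2) \in codom w.
  by move: (gK j) => /= E; rewrite -{1}E -surjective_pairing codom_f.
case: b; first by case: ((j, true) \in codom w).
rewrite eq_sym eqbF_neg; apply/idP/negP => [jf jt | jt].
  by have := sign_uniq _ _ jf jt.
by case: (w (g j)).2 j_in => // /jt.
Qed.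

Lemma eq_increasing_sp (w w' : sp) :
  signed_perm w -> increasing_sp w -> signed_perm w' -> increasing_sp w' ->
  (forall j, ((j, true) \in codom w) = ((j, true) \in codom w')) -> w = w'.
Proof.
rewrite !increasing_spE => sw iw sw' iw' same_neg.
have same_codom : codom w =i codom w'.
  by case=> j b; rewrite (signed_perm_codom _ _ _ sw) (signed_perm_codom _ _ _ sw') same_neg.
have /(inj_map sval_inj) : map svalN (codom w) = map svalN (codom w').
  apply: (irr_sorted_eq lt_trans ltxx) => // x.
  by apply/mapP/mapP => -[p Hp ->]; exists p; rewrite ?same_codom // -same_codom.
rewrite !codomE => /eq_in_map w_w'; apply/ffunP => i.
by apply: w_w'; rewrite mem_enum.
Qed.

Definition neg_entries (t : N.-tuple bool) := [seq j <- enum 'I_N | tnth t j].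
Definition pos_entries (t : N.-tuple bool) := [seq j <- enum 'I_N | ~~ tnth t j].

Definition signed_seq (t : N.-tuple bool) : seq ('I_N * bool) :=
  rev [seq (j, true) | j <- neg_entries t] ++ [seq (j, false) | j <- pos_entries t].

Definition sp_of_mask (t : N.-tuple bool) : sp :=
  [ffun i : 'I_N => nth (ord0, false) (signed_seq t) i].

Definition mask_of_sp (w : sp) : N.-tuple bool :=
  [tuple (i, true) \in codom w | i < N].

Lemma size_signed_seq t : size (signed_seq t) = N.
Proof.
rewrite size_cat size_rev !size_map !size_filter.
by rewrite (count_predC (tnth t)) size_enum_ord.
Qed.

Lemma codom_sp_of_mask t : codom (sp_of_mask t) = signed_seq t.
Proof.
rewrite codomE -[RHS](mkseq_nth (ord0, false)) size_signed_seq /mkseq.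
by rewrite -val_enum_ord -map_comp; apply: eq_map => i; rewrite ffunE.
Qed.

Lemma sorted_signed_seq t : sorted <%R (map svalN (signed_seq t)).
Proof.
have sorted_entries (b : bool) (s : seq 'I_N) : sorted (relpre val ltn) s ->
    sorted (fun x y : int => if b then y < x else x < y) [seq svalN (j, b) | j <- s].
  move=> s_sorted; rewrite sorted_map; apply: sub_sorted s_sorted => i j /=.
  by rewrite /Defs.sval; case: b => /=; lia.
have sorted_part (p : pred 'I_N) : sorted (relpre val ltn) [seq j <- enum 'I_N | p j].
  by apply: sorted_filter (sorted_enum_ord N) => ? ? ?; apply: ltn_trans.
have neg_sorted := sorted_entries true _ (sorted_part (tnth t)).
have pos_sorted := sorted_entries false _ (sorted_part (predC (tnth t))).
rewrite sorted_pairwise; last exact: lt_trans.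
rewrite map_cat pairwise_cat -!sorted_pairwise; try exact: lt_trans.
rewrite map_rev rev_sorted -!map_comp.
apply/and3P; split; [| exact: neg_sorted | exact: pos_sorted].
apply/allrelP => a b; rewrite mem_rev => /mapP[i _ ->] /mapP[j _ ->].
by rewrite /Defs.sval /=; lia.
Qed.

Lemma sp_of_mask_signed t : signed_perm (sp_of_mask t).
Proof.
rewrite signed_permE codom_sp_of_mask /signed_seq map_cat map_rev -!map_comp.
rewrite !map_id (perm_uniq (s2 := enum 'I_N)) ?enum_uniq //.
by rewrite perm_sym -(perm_filterC (tnth t)) perm_cat2r perm_sym perm_rev.
Qed.

Lemma sp_of_mask_increasing t : increasing_sp (sp_of_mask t).
Proof. by rewrite increasing_spE codom_sp_of_mask sorted_signed_seq. Qed.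

Lemma sp_of_maskK : cancel sp_of_mask mask_of_sp.
Proof.
move=> t; apply: eq_from_tnth => j.
rewrite tnth_mktuple codom_sp_of_mask mem_cat mem_rev.
have inj_neg : injective (fun i : 'I_N => (i, true)) by move=> i i' [].
rewrite (mem_map inj_neg) mem_filter mem_enum andbT.
by case: (tnth t j) => //=; apply/negbTE/mapP => -[].
Qed.

Lemma mask_of_spK (w : sp) : signed_perm w -> increasing_sp w ->
  sp_of_mask (mask_of_sp w) = w.
Proof.
move=> sw iw; apply: eq_increasing_sp => //;
  [exact: sp_of_mask_signed | exact: sp_of_mask_increasing |] => j.
by have := congr1 (fun u => tnth u j) (sp_of_maskK (mask_of_sp w)); rewrite !tnth_mktuple.
Qed.

Lemma act_word_sp_of_mask (Y : lmodType rat) (bar : Y -> Y) (y : 'I_N -> Y) t :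
  act_word bar y (sp_of_mask t) = signed_word bar (map y (enum 'I_N)) t.
Proof.
pose y_at (p : 'I_N * bool) := if p.2 then bar (y p.1) else y p.1.
have -> : act_word bar y (sp_of_mask t) = map y_at (codom (sp_of_mask t)).
  by rewrite codomE -map_comp.
have negE : mask t (enum 'I_N) = neg_entries t.
  by rewrite /neg_entries filter_mask map_tnth_enum.
have posE : mask (map negb t) (enum 'I_N) = pos_entries t.
  by rewrite /pos_entries filter_mask (map_comp negb (tnth t)) map_tnth_enum.
rewrite codom_sp_of_mask /signed_word -(map_mask y t) -(map_mask y (map negb t)).
by rewrite negE posE /signed_seq map_cat map_rev -!map_comp.
Qed.

End IncreasingSignedPerms.

Theorem proposition8p7 (Y : lmodType rat) (bar : {linear Y -> Y})
  (bar_invol : involutive bar) (n : nat) (y : 'I_n.+1 -> Y) :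
  forall (V : lmodType rat) (phi : seq Y -> V), multilinear_on n.+1 phi ->
    \sum_(w : {ffun 'I_n.+1 -> 'I_n.+1 * bool} | signed_perm w && increasing_sp w)
        phi (act_word bar y w)
    = \sum_(u <- tau_chain bar (y ord0) [seq y (lift ord0 i) | i <- enum 'I_n])
        phi u.
Proof.
(* The two sides are already equal as formal sums of words. *)
move=> V phi _.
rewrite (reindex_onto (@sp_of_mask n) (@mask_of_sp n)); last first.
  by move=> w /andP[]; exact: mask_of_spK.
rewrite (eq_bigl xpredT); last first.
  by move=> t; rewrite sp_of_mask_signed sp_of_mask_increasing sp_of_maskK eqxx.
under eq_bigr => t _ do rewrite act_word_sp_of_mask.
rewrite tau_chainE // size_map size_enum_ord.
have -> : y ord0 :: [seq y (lift ord0 i) | i <- enum 'I_n] = map y (enum 'I_n.+1).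
  by rewrite enum_ordSl /= -map_comp.
by rewrite big_map (perm_big _ (perm_sign_masks n.+1)) big_map big_enum.
Qed.
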